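(* Let $M$ be a module over a ring. For all $X,A,B\subseteq M$, $$X\oplus(A\cap B)=\bigcap_{Y\subseteq X}\Big((Y\oplus A)\cup\big((X\setminus Y)\oplus B\big)\Big).$$
   Context: For $A,B\subseteq M$, the Minkowski addition is $A\oplus B=\{a+b : a\in A, b\in B\}$. *)

From HB Require Import structures.
From mathcomp Require Import all_boot all_order all_algebra.
From mathcomp Require Import boolp classical_sets.
Set Implicit Arguments. Unset Strict Implicit. Unset Printing Implicit Defensive.
Import GRing.Theory.
Local Open Scope classical_set_scope.
Local Open Scope ring_scope.

Definition minkowski (V : zmodType) (A B : set V) : set V :=
  [set a + b | a in A & b in B].

From HB Require Import structures.
From mathcomp Require Import all_boot all_order all_algebra.
From mathcomp Require Import boolp classical_sets.
Local Open Scope classical_set_scope.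
Local Open Scope ring_scope.
Import GRing.Theory.

(* Only the additive group structure matters. The inclusion from left to right
   holds for every Y, splitting the X-summand according to Y. Conversely, if z
   lies in every member of the intersection, take Y := {x in X | z - x in B}:
   z cannot be in (X \ Y) + B, so z = y + a with y in Y and a in A, and then
   a = z - y is also in B. *)

Section MinkowskiSplit.
Variable V : zmodType.
Implicit Types (A B X Y : set V) (z : V).

Lemma minkowskiP A B z : minkowski A B z <-> exists2 x, A x & B (z - x).
Proof.
split=> [[x Ax [b Bb <-]]|[x Ax Bzx]]; first by exists x; rewrite // addrC addKr.
by exists x => //; exists (z - x); rewrite // addrC subrK.
Qed.

Lemma minkowskiI_subU X Y A B :
  minkowski X (A `&` B) `<=` minkowski Y A `|` minkowski (X `\` Y) B.
Proof.
move=> _ [x Xx [c [Ac Bc] <-]].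
have [Yx|nYx] := pselect (Y x); [left|right]; by exists x => //; exists c.
Qed.

Lemma bigcap_minkowski_subI X A B :
  \bigcap_(Y in [set Y | Y `<=` X]) (minkowski Y A `|` minkowski (X `\` Y) B)
  `<=` minkowski X (A `&` B).
Proof.
move=> z zY; pose Yz := [set x | X x /\ B (z - x)].
have Yz_sub : Yz `<=` X by move=> x [].
have [/minkowskiP[y [Xy Bzy] Azy] | /minkowskiP[x [Xx nYx] Bzx]] := zY Yz Yz_sub.
- by apply/minkowskiP; exists y.
- by exfalso; apply: nYx.
Qed.

Lemma minkowskiI_bigcap X A B :
  minkowski X (A `&` B) =
  \bigcap_(Y in [set Y | Y `<=` X]) (minkowski Y A `|` minkowski (X `\` Y) B).
Proof.
apply/seteqP; split; last exact: bigcap_minkowski_subI.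
by move=> z Xz Y _; apply: minkowskiI_subU.
Qed.

End MinkowskiSplit.

Theorem mainTheorem16 (R : pzRingType) (M : lmodType R) (X A B : set M) :
  minkowski X (A `&` B) =
  \bigcap_(Y in [set Y : set M | Y `<=` X])
     (minkowski Y A `|` minkowski (X `\` Y) B).
Proof. exact: minkowskiI_bigcap. Qed.
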